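(* Let $X$ be an Alexandroff space and define an equivalence relation $\sim$ on $X$ by $x\sim y$ if and only if $S(x)=S(y)$. Then the quotient space $X/\sim$ (with the quotient topology) is discrete if and only if $S(x)$ is irreducible for every $x\in X$.
   Context: A topological space $X$ is an Alexandroff space if arbitrary intersections of open sets are open. In an Alexandroff space, $S(x)$ denotes the minimal open neighborhood of $x$, i.e. the intersection of all open sets containing $x$, which is open. $S(x)$ is called irreducible if for every $y\in X$, $S(y)\subseteq S(x)$ implies $S(y)=S(x)$. *)

From HB Require Import structures.
From mathcomp Require Import all_boot all_order generic_quotient.
From mathcomp Require Import all_classical topology_structure quotient_topology.
Set Implicit Arguments. Unset Strict Implicit. Unset Printing Implicit Defensive.
Local Open Scope classical_set_scope.
Local Open Scope quotient_scope.

Definition alexandroff (X : topologicalType) : Prop :=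
  forall F : set (set X), F `<=` open -> open (\bigcap_(A in F) A).

Definition minnbhd (X : topologicalType) (x : X) : set X :=
  \bigcap_(A in [set A : set X | open A /\ A x]) A.

Definition irreducible_nbhd (X : topologicalType) (x : X) : Prop :=
  forall y : X, minnbhd y `<=` minnbhd x -> minnbhd y = minnbhd x.

Definition simS (X : topologicalType) : rel X :=
  fun x y => `[< minnbhd x = minnbhd y >].

Lemma simS_refl (X : topologicalType) : reflexive (@simS X).
Proof. by move=> x; apply/asboolP. Qed.
Lemma simS_sym (X : topologicalType) : symmetric (@simS X).
Proof.
move=> x y; apply/asboolP/asboolP => ->; exact: erefl.
Qed.
Lemma simS_trans (X : topologicalType) : transitive (@simS X).
Proof. by move=> y x z /asboolP exy /asboolP eyz; apply/asboolP; rewrite exy. Qed.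

Canonical simS_equiv (X : topologicalType) : equiv_rel X :=
  EquivRel (@simS X) (@simS_refl X) (@simS_sym X) (@simS_trans X).

Definition quotS (X : topologicalType) : topologicalType :=
  quotient_topology {eq_quot (simS_equiv X)}.

Definition discrete (T : topologicalType) : Prop := forall A : set T, open A.

(** In an Alexandroff space the minimal neighbourhoods S(x) are open and
  S(y) ⊆ S(x) iff y ∈ S(x).  The quotient X/~ is discrete iff every fibre of
  the projection is open.  If the fibre of x is open it contains S(x), so
  every y with S(y) ⊆ S(x) (hence y ∈ S(x)) has S(y) = S(x).  Conversely, if
  every S(x) is irreducible then y ∈ S(x) forces S(y) = S(x), so the
  preimage of any set of classes is the union of the open sets S(y) over its
  points. *)

From mathcomp Require Import all_boot all_classical topology_structure.
From mathcomp Require Import generic_quotient quotient_topology.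
Local Open Scope classical_set_scope.
Local Open Scope quotient_scope.

Section MinimalNeighbourhood.
Variable X : topologicalType.

Lemma minnbhd_refl (x : X) : minnbhd x x.
Proof. by move=> A [_]. Qed.

Lemma minnbhd_sub {x : X} {U : set X} : open U -> U x -> minnbhd x `<=` U.
Proof. by move=> oU Ux z; apply. Qed.

Lemma minnbhd_open (x : X) : alexandroff X -> open (minnbhd x).
Proof. by move=> hX; apply: hX => A []. Qed.

Lemma minnbhd_subP (x y : X) : alexandroff X ->
  minnbhd y `<=` minnbhd x <-> minnbhd x y.
Proof.
move=> hX; split; first by apply; exact: minnbhd_refl.
exact: minnbhd_sub (minnbhd_open x hX).
Qed.

Lemma eq_pi_quotS (x y : X) :
  \pi_(quotS X) x = \pi_(quotS X) y <-> minnbhd x = minnbhd y.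
Proof.
change (\pi_{eq_quot (simS_equiv X)} x = \pi y <-> minnbhd x = minnbhd y).
split => [/eqP|eq_xy]; first by rewrite eqmodE => /asboolP.
by apply/eqP; rewrite eqmodE; apply/asboolP.
Qed.

Lemma open_quotSE (A : set (quotS X)) :
  open A = open (\pi_(quotS X) @^-1` A).
Proof. by []. Qed.

Lemma discrete_quotS_irreducible :
  discrete (quotS X) -> forall x : X, irreducible_nbhd x.
Proof.
move=> hd x y Syx.
have ofib : open (\pi_(quotS X) @^-1` [set \pi_(quotS X) x]).
  by rewrite -open_quotSE; exact: hd.
have := minnbhd_sub ofib erefl y (Syx y (minnbhd_refl y)).
by move=> /= /eq_pi_quotS.
Qed.

Lemma irreducible_discrete_quotS : alexandroff X ->
  (forall x : X, irreducible_nbhd x) -> discrete (quotS X).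
Proof.
move=> hX hirr A; rewrite open_quotSE.
have -> : \pi_(quotS X) @^-1` A =
          \bigcup_(y in \pi_(quotS X) @^-1` A) minnbhd y.
  apply/seteqP; split => [z Az|z [y Ay Syz]].
    by exists z; last exact: minnbhd_refl.
  have /(hirr y)/eq_pi_quotS eq_yz : minnbhd z `<=` minnbhd y by apply/minnbhd_subP.
  by rewrite /preimage /= eq_yz.
by apply: bigcup_open => y _; exact: minnbhd_open.
Qed.

End MinimalNeighbourhood.

Theorem theorem9 (X : topologicalType) (hX : alexandroff X) :
  discrete (quotS X) <-> (forall x : X, irreducible_nbhd x).
Proof.
split; first exact: discrete_quotS_irreducible.
exact: irreducible_discrete_quotS.
Qed.
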